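(* Let $A,B,C$ be distinct subsystems, $\rho_{ABC}$ a subnormalized state on $ABC$, $r\ge0$, $\eta\in(0,\operatorname{tr}\rho_{ABC}]$. Then $H^{r,\eta}_H(A|BC)_\rho\le H^{r,\eta}_H(A|B)_\rho$.
   Context: All logarithms are natural; subnormalized state = positive semidefinite, trace $\le1$; POVM effect = $0\le Q\le\mathbb 1$. Let $S_1\cdots S_N$ be a finite-dimensional composite system and $S_I$ the composite of the $S_i$, $i\in I$ ($A,B,C$ are of the form $S_I,S_J,S_K$ with pairwise disjoint index sets). A family of POVM-effect-complexity sets is a collection of sets $\mathcal M^r_{S_I}$ of POVM effects on $S_I$ with (i) $\mathbb 1_{S_I}\in\mathcal M^0_{S_I}$; (ii) $\mathcal M^r_{S_I}\subseteq\mathcal M^{r'}_{S_I}$ for $r\le r'$; (iii) $Q_1\otimes Q_2\in\mathcal M^{r+r'}_{S_IS_J}$ for disjoint $I,J$, $Q_1\in\mathcal M^r_{S_I}$, $Q_2\in\mathcal M^{r'}_{S_J}$. Fix such a family. Complexity relative entropy on subsystem $X$: $D^{r,\eta}_H(\rho\|\Gamma)=-\log\inf\{\operatorname{tr}(Q\Gamma)/\operatorname{tr}(Q\rho): Q\in\mathcal M^r_X,\operatorname{tr}(Q\rho)\ge\eta\}$. Complexity conditional entropy: $H^{r,\eta}_H(X|Y)_\rho=-D^{r,\eta}_H(\rho_{XY}\|\mathbb 1_X\otimes\rho_Y)$ with $\rho_{XY},\rho_Y$ the reduced states of $\rho$. *)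

From mathcomp Require Import all_boot all_order all_algebra.
From mathcomp Require Import complex.
From mathcomp Require Import classical_sets reals exp.

Set Implicit Arguments.
Unset Strict Implicit.
Unset Printing Implicit Defensive.

Import Order.TTheory GRing.Theory Num.Theory.
Local Open Scope ring_scope.

Section Composite.

Variable R : realType.
(* Composite system S_1 ... S_N ; site i has orthonormal basis indexed by T i,
   i.e. Hilbert space C^(T i). *)
Variable N : nat.
Variable T : 'I_N -> finType.

(* Ambient "configuration" type: a partial basis label, None = site absent. *)
Definition amb := {dffun forall i : 'I_N, option (T i)}.

Definition onI (I : {set 'I_N}) (f : amb) : bool :=
  [forall i, (f i != None) == (i \in I)].

(* basis of the Hilbert space of S_I = tensor_{i in I} C^(T i) *)
Definition conf (I : {set 'I_N}) := {f : amb | onI I f}.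

Definition rst (J : {set 'I_N}) (f : amb) : amb :=
  [ffun i => if i \in J then f i else None].

Lemma onI_rst (I K : {set 'I_N}) (h : I \subset K) (u : conf K) :
  onI I (rst I (val u)).
Proof.
apply/forallP => i; rewrite /rst ffunE.
case: ifP => // iI.
have := forallP (valP u) i; rewrite (fintype.subsetP h i iI) => /eqP ->.
by [].
Qed.

Definition restr (I K : {set 'I_N}) (h : I \subset K) (u : conf K) : conf I :=
  exist _ (rst I (val u)) (onI_rst h u).

(* linear operators on S_I, as matrices in the product basis *)
Definition op (I : {set 'I_N}) := conf I -> conf I -> R[i].

Definition id_op (I : {set 'I_N}) : op I := fun x y => (x == y)%:R.

Definition opsub (I : {set 'I_N}) (P Q : op I) : op I := fun x y => P x y - Q x y.

Definition opmul (I : {set 'I_N}) (P Q : op I) : op I :=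
  fun x y => \sum_(z : conf I) P x z * Q z y.

Definition tr (I : {set 'I_N}) (P : op I) : R[i] := \sum_(x : conf I) P x x.

Definition psd (I : {set 'I_N}) (P : op I) : Prop :=
  forall v : conf I -> R[i],
    0 <= \sum_(x : conf I) \sum_(y : conf I) (v x)^*%C * P x y * v y.

Definition subnormalized (I : {set 'I_N}) (rho : op I) : Prop :=
  psd rho /\ tr rho <= 1.

Definition effect (I : {set 'I_N}) (Q : op I) : Prop :=
  psd Q /\ psd (opsub (@id_op I) Q).

Definition tens (I J : {set 'I_N}) (Q1 : op I) (Q2 : op J) : op (I :|: J) :=
  fun u v => Q1 (restr (finset.subsetUl I J) u) (restr (finset.subsetUl I J) v)
           * Q2 (restr (finset.subsetUr I J) u) (restr (finset.subsetUr I J) v).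

(* partial trace of an operator on S_K down to S_J (meaningful for J \subset K):
   (ptr J rho) x y = sum_z rho (x z) (y z), z ranging over the basis of S_{K \ J} *)
Definition ptr (K J : {set 'I_N}) (rho : op K) : op J :=
  fun x y => \sum_(u : conf K) \sum_(v : conf K |
      [&& rst J (val u) == val x, rst J (val v) == val y &
          rst (K :\: J) (val u) == rst (K :\: J) (val v)]) rho u v.

Definition complexity_family (M : forall I : {set 'I_N}, R -> op I -> Prop) : Prop :=
  [/\ (forall (I : {set 'I_N}) (r : R) (Q : op I), 0 <= r -> M I r Q -> effect Q),
      (forall I : {set 'I_N}, M I 0 (@id_op I)),
      (forall (I : {set 'I_N}) (r r' : R) (Q : op I), 0 <= r -> r <= r' -> M I r Q -> M I r' Q) &
      (forall (I J : {set 'I_N}) (r r' : R) (Q1 : op I) (Q2 : op J), [disjoint I & J] -> 0 <= r -> 0 <= r' ->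
         M I r Q1 -> M J r' Q2 -> M (I :|: J) (r + r') (tens Q1 Q2))].

Definition DH (M : forall I : {set 'I_N}, R -> op I -> Prop)
    (X : {set 'I_N}) (r eta : R) (rho Gamma : op X) : R :=
  - ln (inf [set complex.Re (tr (opmul Q Gamma) / tr (opmul Q rho)) |
              Q in [set Q | M X r Q /\ (eta%:C)%C <= tr (opmul Q rho)]]).

Definition HH (M : forall I : {set 'I_N}, R -> op I -> Prop)
    (r eta : R) (K X Y : {set 'I_N}) (rho : op K) : R :=
  - @DH M (X :|: Y) r eta (@ptr K (X :|: Y) rho) (@tens X Y (@id_op X) (@ptr K Y rho)).

End Composite.

From mathcomp Require Import all_boot all_order all_algebra.
From mathcomp Require Import complex.
From mathcomp Require Import boolp classical_sets reals exp.
From mathcomp Require Import ring lra.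

(* Write [d = |A|].  Since [rho_ABC <= d (1_A (x) rho_BC)] as operators and
   [tr (Q X) >= 0] for positive semidefinite [Q] and [X], every ratio
   [tr (Q (1_A (x) rho_BC)) / tr (Q rho_ABC)] over which the infimum defining
   [H(A|BC)] is taken is at least [1/d > 0].  A test [Q] on [AB] yields the test
   [Q (x) 1_C] on [ABC] of the same complexity and with the same ratio, because
   tracing out [C] maps [rho_ABC] to [rho_AB] and [1_A (x) rho_BC] to
   [1_A (x) rho_B].  So the infimum for [A|BC] ranges over a superset of the one
   for [A|B], and [ln] is monotone on the positive reals. *)

Set Implicit Arguments.
Unset Strict Implicit.
Unset Printing Implicit Defensive.

Import Order.TTheory GRing.Theory Num.Theory.
Local Open Scope ring_scope.

Section SesquilinearForm.
Variables (R : realType) (X : finType).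
Local Notation C := R[i].

Definition sform (P : X -> X -> C) (u v : X -> C) : C :=
  \sum_x \sum_y (u x)^*%C * P x y * v y.

Definition psd_form (P : X -> X -> C) := forall v, 0 <= sform P v v.

Local Notation delta x := (fun z : X => (z == x)%:R : C).

Lemma sum_natr_eq_mull (F : X -> C) x : \sum_z ((z == x)%:R * F z) = F x.
Proof.
under eq_bigr do rewrite mulr_natl mulrb.
by rewrite -big_mkcond big_pred1_eq.
Qed.

Lemma sum_natr_eq_mulr (F : X -> C) x : \sum_z (F z * (z == x)%:R) = F x.
Proof. by under eq_bigr do rewrite mulrC; rewrite sum_natr_eq_mull. Qed.

Lemma sformDl P u u' v :
  sform P (fun z => u z + u' z) v = sform P u v + sform P u' v.
Proof.
rewrite /sform -big_split; apply: eq_bigr => x _; rewrite -big_split.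
by apply: eq_bigr => y _; rewrite rmorphD !mulrDl.
Qed.

Lemma sformDr P u v v' :
  sform P u (fun z => v z + v' z) = sform P u v + sform P u v'.
Proof.
rewrite /sform -big_split; apply: eq_bigr => x _; rewrite -big_split.
by apply: eq_bigr => y _; rewrite mulrDr.
Qed.

Lemma sformZl P c u v : sform P (fun z => c * u z) v = c^*%C * sform P u v.
Proof.
rewrite /sform mulr_sumr; apply: eq_bigr => x _; rewrite mulr_sumr.
by apply: eq_bigr => y _; rewrite rmorphM !mulrA.
Qed.

Lemma sformZr P c u v : sform P u (fun z => c * v z) = c * sform P u v.
Proof.
rewrite /sform mulr_sumr; apply: eq_bigr => x _; rewrite mulr_sumr.
by apply: eq_bigr => y _; rewrite mulrCA.
Qed.

Lemma sformNl P u v : sform P (fun z => - u z) v = - sform P u v.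
Proof.
rewrite /sform -sumrN; apply: eq_bigr => x _; rewrite -sumrN.
by apply: eq_bigr => y _; rewrite rmorphN !mulNr.
Qed.

Lemma sformNr P u v : sform P u (fun z => - v z) = - sform P u v.
Proof.
rewrite /sform -sumrN; apply: eq_bigr => x _; rewrite -sumrN.
by apply: eq_bigr => y _; rewrite mulrN.
Qed.

Lemma sform_suml (I : finType) P (f : I -> X -> C) v :
  sform P (fun z => \sum_i f i z) v = \sum_i sform P (f i) v.
Proof.
rewrite /sform [RHS]exchange_big; apply: eq_bigr => x _; rewrite [RHS]exchange_big.
by apply: eq_bigr => y _; rewrite rmorph_sum !mulr_suml.
Qed.

Lemma sform_sumr (I : finType) P u (f : I -> X -> C) :
  sform P u (fun z => \sum_i f i z) = \sum_i sform P u (f i).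
Proof.
rewrite /sform [RHS]exchange_big; apply: eq_bigr => x _; rewrite [RHS]exchange_big.
by apply: eq_bigr => y _; rewrite mulr_sumr.
Qed.

Lemma sform_deltal P x v : sform P (delta x) v = \sum_y P x y * v y.
Proof.
rewrite /sform -(sum_natr_eq_mull (fun z => \sum_y P z y * v y) x).
apply: eq_bigr => z _; rewrite conjc_nat mulr_sumr.
by apply: eq_bigr => y _; rewrite mulrA.
Qed.

Lemma sform_deltar P u y : sform P u (delta y) = \sum_x (u x)^*%C * P x y.
Proof. by apply: eq_bigr => x _; rewrite sum_natr_eq_mulr. Qed.

Lemma sform_delta P x y : sform P (delta x) (delta y) = P x y.
Proof. by rewrite sform_deltal sum_natr_eq_mulr. Qed.

Lemma sform_pair P x y a t :
  sform P (fun z => a * (z == x)%:R + t * (z == y)%:R)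
          (fun z => a * (z == x)%:R + t * (z == y)%:R)
  = a^*%C * a * P x x + a^*%C * t * P x y + t^*%C * a * P y x + t^*%C * t * P y y.
Proof.
rewrite sformDl !sformDr !sformZl !sformZr !sform_delta.
by rewrite !mulrA !addrA.
Qed.

Lemma sformB P u v :
  sform P (fun z => u z - v z) (fun z => u z - v z) =
  sform P u u - sform P u v - sform P v u + sform P v v.
Proof. by rewrite sformDl !sformDr !sformNl !sformNr; ring. Qed.

Lemma sform_scaleB P Q d u :
  sform (fun x y => d * P x y - Q x y) u u = d * sform P u u - sform Q u u.
Proof.
rewrite /sform mulr_sumr -sumrB; apply: eq_bigr => x _.
by rewrite mulr_sumr -sumrB; apply: eq_bigr => y _; ring.
Qed.

Lemma complex_ge0 (z : C) : 0 <= z -> complex.Im z = 0 /\ 0 <= complex.Re z.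
Proof. by case: z => a b; rewrite lecE /= => /andP[/eqP]. Qed.

Lemma complex_ge0_conj (z : C) : 0 <= z -> z^*%C = z.
Proof. by case: z => a b /complex_ge0 /= [-> _]; rewrite /= oppr0. Qed.

Variable P : X -> X -> C.
Hypothesis psdP : psd_form P.

Lemma psd_diag_ge0 x : 0 <= P x x.
Proof. by have := psdP (delta x); rewrite sform_delta. Qed.

Lemma psd_adjoint x y : P y x = (P x y)^*%C.
Proof.
have [<-|_] := eqVneq x y; first by rewrite complex_ge0_conj ?psd_diag_ge0.
have := psdP (fun z => 1 * (z == x)%:R + 1 * (z == y)%:R).
have := psdP (fun z => 1 * (z == x)%:R + 'i%C * (z == y)%:R).
rewrite !sform_pair !rmorph1 !mul1r.
have /complex_ge0 [] := psd_diag_ge0 x; have /complex_ge0 [] := psd_diag_ge0 y.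
case: (P x x) => a b; case: (P y y) => c d; case: (P x y) => e f; case: (P y x) => g h /=.
move=> -> _ -> _; simpc => /andP[/eqP H1 _] /andP[/eqP H2 _].
by congr Complex; lra.
Qed.

(* If [m = |P y x0|^2 > 0], testing [P] against [m e_y + w e_x0] for a
   suitable [w] gives the value [- m^2 (P y y + 2) < 0]. *)
Lemma psd_col0 x0 : P x0 x0 = 0 -> forall y, P y x0 = 0.
Proof.
move=> P0 y; have [->//|_] := eqVneq y x0.
have hx0 := psd_adjoint y x0; have /complex_ge0 [] := psd_diag_ge0 y.
move: hx0; case Eyx : (P y x0) => [g h] hx0; case Ey : (P y y) => [c d] /= d0 c_ge0.
pose m := g ^+ 2 + h ^+ 2.
have [m0|m_neq0] := eqVneq m 0.
  have g0 : g = 0 by apply/eqP; rewrite -sqrf_eq0; apply/eqP; move: m0; rewrite /m; nra.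
  have h0 : h = 0 by move: m0; rewrite /m g0; nra.
  by rewrite g0 h0.
have := psdP (fun z => m%:C%C * (z == y)%:R + Complex (- (c + 1) * g) ((c + 1) * h) * (z == x0)%:R).
rewrite sform_pair hx0 Eyx Ey P0 d0 /=; simpc => /andP[_].
have m_gt0 : 0 < m by rewrite lt_def m_neq0 addr_ge0 ?sqr_ge0.
set k := (X in 0 <= X -> _); have -> : k = - (m * m * (c + 2)) by rewrite /k /m; ring.
by rewrite oppr_ge0 leNgt !mulr_gt0 // ltr_wpDl.
Qed.

(* Schur complement of the diagonal entry at [x0]: the form tested on [v]
   equals [P] tested on [v - (P x0 v / P x0 x0) e_x0]. *)
Lemma psd_schur x0 : P x0 x0 != 0 ->
  psd_form (fun x y => P x y - P x x0 * P x0 y / P x0 x0).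
Proof.
move=> p_neq0 v; set p := P x0 x0.
have p_conj : p^*%C = p by rewrite complex_ge0_conj ?psd_diag_ge0.
set al := \sum_x (v x)^*%C * P x x0; set be := \sum_y P x0 y * v y.
have -> : sform (fun x y => P x y - P x x0 * P x0 y / p) v v = sform P v v - al * be / p.
  rewrite /sform /al /be mulr_suml mulr_suml -sumrB; apply: eq_bigr => x _.
  rewrite mulr_sumr mulr_suml -sumrB; apply: eq_bigr => y _.
  by rewrite mulrBr mulrBl; congr (_ - _); rewrite !mulrA; ring.
pose t := - be / p.
have := psdP (fun z => v z + t * (z == x0)%:R).
rewrite sformDl !sformDr !sformZl !sformZr sform_delta sform_deltal sform_deltar -/al -/be -/p.
have -> : t^*%C = - be^*%C / p by rewrite /t rmorphM rmorphN /= conjc_inv p_conj.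
by congr (0 <= _); rewrite /t; field.
Qed.

End SesquilinearForm.

Section PsdTrace.
Variables (R : realType) (X : finType).
Local Notation C := R[i].

(* Induction on the support of [P], peeling off one Schur complement at a
   time: [P = P' + (P e_x0)(P e_x0)^* / P x0 x0] with [P'] psd and vanishing
   outside a smaller set. *)
Lemma psd_trace_mul_ge0 (Q P : X -> X -> C) :
  psd_form Q -> psd_form P -> 0 <= \sum_x \sum_z Q x z * P z x.
Proof.
move=> psdQ.
suff : forall n (S : {set X}) P, (#|S| <= n)%N -> psd_form P ->
    (forall x y, x \notin S -> P x y = 0) -> 0 <= \sum_x \sum_z Q x z * P z x.
  by move=> H psdP; apply: (H _ finset.setT _ (leqnn _) psdP) => x y; rewrite finset.in_setT.
elim=> [|n IH] S {}P S_le psdP P_out.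
  rewrite big1 // => x _; rewrite big1 // => z _.
  move: S_le; rewrite leqn0 cards_eq0 => /eqP S0.
  by rewrite (psd_adjoint psdP) P_out ?S0 ?inE // rmorph0 mulr0.
have [S0|[x0 x0S]] := set_0Vmem S.
  by apply: (IH S) => //; rewrite S0 cards0.
have S'_le : (#|S :\ x0| <= n)%N by move: S_le; rewrite (cardsD1 x0) x0S.
have P_out' (P' : X -> X -> C) : (forall y, P' x0 y = 0) ->
    (forall x y, x \notin S -> P' x y = 0) -> forall x y, x \notin S :\ x0 -> P' x y = 0.
  by move=> P'0 P'out x y; rewrite !inE negb_and negbK => /orP[/eqP ->|/P'out].
have [p0|p_neq0] := eqVneq (P x0 x0) 0.
  apply: (IH (S :\ x0)) => //; apply: P_out' => // y.
  by rewrite (psd_adjoint psdP) (psd_col0 psdP p0) rmorph0.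
set p := P x0 x0.
have -> : \sum_x \sum_z Q x z * P z x =
    \sum_x \sum_z Q x z * (P z x - P z x0 * P x0 x / p) +
    sform Q (fun z => P z x0) (fun z => P z x0) / p.
  rewrite /sform mulr_suml -big_split; apply: eq_bigr => x _.
  rewrite mulr_suml -big_split; apply: eq_bigr => z _.
  by rewrite -(psd_adjoint psdP) /p /=; field.
apply: addr_ge0; last by rewrite divr_ge0 ?psd_diag_ge0.
apply: (IH (S :\ x0)) => //; first exact: psd_schur.
apply: P_out' => [y|x y /P_out hx]; first by rewrite -/p; field.
by rewrite !hx !mul0r subrr.
Qed.

Lemma sform_sum_le (I : finType) (P : X -> X -> C) (f : I -> X -> C) :
  psd_form P ->
  sform P (fun z => \sum_i f i z) (fun z => \sum_i f i z) <=
  #|I|%:R * \sum_i sform P (f i) (f i).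
Proof.
move=> psdP; set S1 := \sum_i sform P (f i) (f i).
set S2 := \sum_i \sum_j sform P (f i) (f j).
have -> : sform P (fun z => \sum_i f i z) (fun z => \sum_i f i z) = S2.
  by rewrite sform_suml; apply: eq_bigr => i _; rewrite sform_sumr.
have diff_ge0 : 0 <= \sum_i \sum_j sform P (fun z => f i z - f j z) (fun z => f i z - f j z).
  by do 2!apply: sumr_ge0 => ? _; apply: psdP.
have diff_sum : \sum_i \sum_j sform P (fun z => f i z - f j z) (fun z => f i z - f j z) =
    2%:R * (#|I|%:R * S1 - S2).
  have row i : \sum_j sform P (fun z => f i z - f j z) (fun z => f i z - f j z) =
      #|I|%:R * sform P (f i) (f i) - \sum_j sform P (f i) (f j)
      - \sum_j sform P (f j) (f i) + S1.
    rewrite (eq_bigr _ (fun j _ => sformB P (f i) (f j))).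
    by rewrite !big_split /= !sumrN sumr_const mulr_natl.
  rewrite (eq_bigr _ (fun i _ => row i)) !big_split /= !sumrN -mulr_sumr.
  rewrite [\sum_i \sum_j sform P (f j) (f i)]exchange_big sumr_const.
  by rewrite -/S1 -/S2 mulr_natl; ring.
by rewrite -subr_ge0 -(pmulr_rge0 _ (ltr0n _ 2)) -diff_sum.
Qed.

End PsdTrace.

Section Configurations.
Variables (N : nat) (T : 'I_N -> finType).
Local Notation amb := (amb T).
Local Notation conf := (conf T).

Lemma conf_out (I : {set 'I_N}) (u : conf I) i : i \notin I -> val u i = None.
Proof. by move=> iI; have := forallP (valP u) i; rewrite (negbTE iI); case: (val u i). Qed.

Lemma rst_val (I : {set 'I_N}) (u : conf I) : rst I (val u) = val u.
Proof.
apply/ffunP => i; rewrite ffunE; case: ifP => // /negbT iI.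
by rewrite conf_out.
Qed.

Definition glue (J : {set 'I_N}) (f g : amb) : amb :=
  [ffun i => if i \in J then f i else g i].

Lemma rst_glue_l (J : {set 'I_N}) (f g : amb) : rst J (glue J f g) = rst J f.
Proof. by apply/ffunP => i; rewrite !ffunE; case: ifP => // ->. Qed.

Lemma rst_glue_r (J L : {set 'I_N}) (f g : amb) :
  [disjoint J & L] -> rst L (glue J f g) = rst L g.
Proof.
move=> dJL; apply/ffunP => i; rewrite !ffunE.
by case: ifP => // iL; rewrite (disjointFl dJL iL).
Qed.

Lemma rst_setU (J L : {set 'I_N}) (f : amb) : rst (J :|: L) f = glue J (rst J f) (rst L f).
Proof. by apply/ffunP => i; rewrite !ffunE inE; case: (i \in J). Qed.

Section Glue.
Variables (J L : {set 'I_N}).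
Hypothesis dJL : [disjoint J & L].

Lemma onI_glue (x : conf J) (y : conf L) : onI (J :|: L) (glue J (val x) (val y)).
Proof.
apply/forallP => i; rewrite ffunE inE.
case: ifP => iJ; first by have := forallP (valP x) i; rewrite iJ.
by have := forallP (valP y) i.
Qed.

Definition cglue (x : conf J) (y : conf L) : conf (J :|: L) :=
  exist _ (glue J (val x) (val y)) (onI_glue x y).

Lemma restr_cglue_l x y : restr (finset.subsetUl J L) (cglue x y) = x.
Proof. by apply: val_inj; rewrite /= rst_glue_l rst_val. Qed.

Lemma restr_cglue_r x y : restr (finset.subsetUr J L) (cglue x y) = y.
Proof. by apply: val_inj; rewrite /= rst_glue_r // rst_val. Qed.

Lemma cglue_restr (u : conf (J :|: L)) :
  cglue (restr (finset.subsetUl J L) u) (restr (finset.subsetUr J L) u) = u.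
Proof. by apply: val_inj; rewrite /= -rst_setU rst_val. Qed.

Lemma eq_cglue x y x' y' : (cglue x y == cglue x' y') = (x == x') && (y == y').
Proof.
apply/eqP/andP => [e|[/eqP -> /eqP ->] //]; split; apply/eqP.
  by rewrite -(restr_cglue_l x y) e restr_cglue_l.
by rewrite -(restr_cglue_r x y) e restr_cglue_r.
Qed.

Lemma big_cglue (V : nmodType) (F : conf (J :|: L) -> V) :
  \sum_u F u = \sum_x \sum_y F (cglue x y).
Proof.
rewrite pair_bigA (reindex (fun p => cglue p.1 p.2)) //=.
exists (fun u => (restr (finset.subsetUl J L) u, restr (finset.subsetUr J L) u)) => [[x y] _|u _].
  by rewrite /= restr_cglue_l restr_cglue_r.
exact: cglue_restr.
Qed.

End Glue.

Variable R : realType.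
Local Notation op := (op R T).

(* The partial trace computed through a parametrisation [phi] of the basis of
   [K] whose first argument determines the [J]-part and whose second argument
   determines the traced-out [K :\: J]-part. *)
Lemma ptr_decomp (K J : {set 'I_N}) (U W : finType) (phi : U -> W -> conf K)
    (f : U -> conf J) (X : op K) :
  (forall F : conf K -> R[i], \sum_x F x = \sum_u \sum_w F (phi u w)) ->
  (forall u w u', (rst J (val (phi u w)) == val (f u')) = (u == u')) ->
  (forall u w u' w',
     (rst (K :\: J) (val (phi u w)) == rst (K :\: J) (val (phi u' w'))) = (w == w')) ->
  forall u u', ptr (J := J) X (f u) (f u') = \sum_w X (phi u w) (phi u' w).
Proof.
move=> sumK eqJ eqD u u'; rewrite /ptr sumK.
under eq_bigr => u1 _ do under eq_bigr => w1 _ do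
  (rewrite big_mkcond sumK; under eq_bigr => u2 _ do under eq_bigr => w2 _ do
     rewrite !eqJ eqD).
rewrite (bigD1 u) //= [X in _ + X]big1 ?addr0 => [|u1 /negbTE neq_u]; last first.
  by apply: big1 => w1 _; apply: big1 => u2 _; apply: big1 => w2 _; rewrite neq_u.
apply: eq_bigr => w1 _.
rewrite (bigD1 u') //= [X in _ + X]big1 ?addr0 => [|u2 /negbTE neq_u']; last first.
  by apply: big1 => w2 _; rewrite neq_u' andbF.
by rewrite !eqxx -big_mkcond /= (big_pred1 w1) // => w2; rewrite eq_sym.
Qed.

Lemma ptr_id (K : {set 'I_N}) (X : op K) : ptr (J := K) X = X.
Proof.
apply/funext => u; apply/funext => v.
have K0 (g : amb) : rst (K :\: K) g = [ffun => None].
  by apply/ffunP => i; rewrite !ffunE !inE andNb.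
rewrite (@ptr_decomp K K _ 'I_1 (fun u _ => u) id X _ _ _ u v) ?big_ord1 //.
- by move=> F; apply: eq_bigr => x _; rewrite big_ord1.
- by move=> ? ? ?; rewrite rst_val val_eqE.
- by move=> ? [[|//] ?] ? [[|//] ?]; rewrite !K0 eqxx.
Qed.

(* [ampl hJ Q] is the ampliation [Q (x) 1] of [Q] to [K]. *)
Definition ampl (J K : {set 'I_N}) (hJ : J \subset K) (Q : op J) : op K :=
  fun x y => Q (restr hJ x) (restr hJ y) *
             (rst (K :\: J) (val x) == rst (K :\: J) (val y))%:R.

Lemma tr_ampl (J K : {set 'I_N}) (hJ : J \subset K) (Q : op J) (X : op K) :
  tr (opmul (ampl hJ Q) X) = tr (opmul Q (ptr (J := J) X)).
Proof.
rewrite /tr /opmul /ptr /ampl.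
under [RHS]eq_bigr => a _ do under eq_bigr => b _ do
  (rewrite mulr_sumr; under eq_bigr => u _ do rewrite big_mkcond mulr_sumr /=).
under [RHS]eq_bigr => a _ do (rewrite exchange_big; under eq_bigr => u _ do rewrite exchange_big).
rewrite [RHS]exchange_big; under [RHS]eq_bigr => u _ do rewrite exchange_big.
rewrite [RHS]exchange_big; apply: eq_bigr => x _; apply: eq_bigr => z _.
have eq_restr (y : conf K) c : (rst J (val y) == val c) = (restr hJ y == c) by [].
rewrite (bigD1 (restr hJ x)) //= [X in _ + X]big1 ?addr0 => [|a neq_a]; last first.
  apply: big1 => b _; rewrite (eq_restr x a).
  by rewrite eq_sym in neq_a; rewrite (negbTE neq_a) andbF mulr0.
rewrite (bigD1 (restr hJ z)) //= [X in _ + X]big1 ?addr0 => [|b neq_b]; last first.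
  by rewrite (eq_restr z b) eq_sym (negbTE neq_b) mulr0.
rewrite (eq_restr z (restr hJ z)) !eqxx /= [rst _ (sval z) == _]eq_sym -mulrA.
by case: eqP; rewrite ?mul1r ?mul0r.
Qed.

Lemma ampl_tens (J L : {set 'I_N}) (Q : op J) : [disjoint J & L] ->
  ampl (finset.subsetUl J L) Q = tens Q (id_op R (I := L)).
Proof.
move=> dJL; apply/funext => x; apply/funext => y; rewrite /ampl /tens /id_op.
suff -> : (J :|: L) :\: J = L by [].
by rewrite finset.setDUl finset.setDv finset.set0U; apply/finset.setDidPl; rewrite disjoint_sym.
Qed.

Lemma glue_rst (J K : {set 'I_N}) (x : conf K) : J \subset K ->
  glue J (rst J (val x)) (rst (K :\: J) (val x)) = val x.
Proof.
move=> hJ; rewrite -rst_setU -[RHS]rst_val; congr rst.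
by apply/setP => i; rewrite !inE; case: (boolP (i \in J)) => //= /(fintype.subsetP hJ) ->.
Qed.

Lemma ampl_id (J K : {set 'I_N}) (hJ : J \subset K) :
  ampl hJ (id_op R (I := J)) = id_op R (I := K).
Proof.
apply/funext => x; apply/funext => y; rewrite /ampl /id_op -natrM mulnb.
congr (nat_of_bool _)%:R; apply/andP/eqP => [[/eqP/(congr1 val)/= eJ /eqP eD]|-> //].
by apply: val_inj; rewrite -(glue_rst x hJ) -(glue_rst y hJ) eJ eD.
Qed.

Lemma tr_id_mul (K : {set 'I_N}) (X : op K) : tr (opmul (id_op R (I := K)) X) = tr X.
Proof.
apply: eq_bigr => x _; rewrite /opmul (bigD1 x) //= big1 ?addr0 => [|z neq_z].
  by rewrite /id_op eqxx mul1r.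
by rewrite /id_op eq_sym (negbTE neq_z) mul0r.
Qed.

Lemma tr_mul_scaleB (K : {set 'I_N}) (Q G X : op K) d :
  tr (opmul Q (fun x y => d * G x y - X x y)) = d * tr (opmul Q G) - tr (opmul Q X).
Proof.
rewrite /tr /opmul mulr_sumr -sumrB; apply: eq_bigr => x _.
by rewrite mulr_sumr -sumrB; apply: eq_bigr => z _; ring.
Qed.

Lemma tr_ptr (J K : {set 'I_N}) (X : op K) : J \subset K -> tr (ptr (J := J) X) = tr X.
Proof. by move=> hJ; rewrite -tr_id_mul -tr_ampl ampl_id tr_id_mul. Qed.

Lemma disjoint_setU (X Y Z : {set 'I_N}) :
  [disjoint X & Y] -> [disjoint X & Z] -> [disjoint X & Y :|: Z].
Proof.
move=> dXY dXZ; apply/pred0P => i /=; rewrite inE.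
by case iX: (i \in X); rewrite //= (disjointFr dXY iX) (disjointFr dXZ iX).
Qed.

Section Bipartite.
Variables (A L : {set 'I_N}).
Hypothesis dAL : [disjoint A & L].
Local Notation K := (A :|: L).
Local Notation restrA := (restr (finset.subsetUl A L)).
Local Notation restrL := (restr (finset.subsetUr A L)).

Lemma ptr_cglue (X : op K) l l' :
  ptr (J := L) X l l' = \sum_a X (cglue a l) (cglue a l').
Proof.
have KL : K :\: L = A.
  by rewrite finset.setDUl finset.setDv finset.setU0; apply/finset.setDidPl.
apply: (@ptr_decomp K L _ _ (fun l a => cglue a l) id).
- by move=> F; rewrite (big_cglue dAL) exchange_big.
- by move=> ? ? ?; rewrite /= rst_glue_r // rst_val val_eqE.
- by move=> ? ? ? ?; rewrite KL /= !rst_glue_l !rst_val val_eqE.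
Qed.

Lemma tens_id_cglue (Y : op L) a l a' l' :
  tens (id_op R (I := A)) Y (cglue a l) (cglue a' l') = (a == a')%:R * Y l l'.
Proof. by rewrite /tens !restr_cglue_l !(restr_cglue_r dAL). Qed.

(* [psi phi a1 a] is [(|a1><a| (x) 1) phi]. *)
Definition psi (phi : conf K -> R[i]) (a1 a : conf A) : conf K -> R[i] :=
  fun u => (restrA u == a1)%:R * phi (cglue a (restrL u)).

Lemma sform_psi (rho : op K) phi a1 a :
  sform rho (psi phi a1 a) (psi phi a1 a) =
  \sum_l \sum_l' (phi (cglue a l))^*%C * rho (cglue a1 l) (cglue a1 l')
                  * phi (cglue a l').
Proof.
have psiE x l : psi phi a1 a (cglue x l) = (x == a1)%:R * phi (cglue a l).
  by rewrite /psi restr_cglue_l (restr_cglue_r dAL).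
rewrite /sform (big_cglue dAL) (bigD1 a1) //= [X in _ + X]big1 ?addr0 => [|x /negbTE neq_x].
  apply: eq_bigr => l _; rewrite (big_cglue dAL) (bigD1 a1) //= [X in _ + X]big1 ?addr0.
    by apply: eq_bigr => l' _; rewrite !psiE eqxx !mul1r.
  by move=> x /negbTE neq_x; apply: big1 => l' _; rewrite !psiE neq_x mul0r mulr0.
by apply: big1 => l _; apply: big1 => y _; rewrite psiE neq_x mul0r rmorph0 !mul0r.
Qed.

(* [1 (x) tr_A rho] is the sum over [a, a1] of [(|a><a1| (x) 1) rho (|a1><a| (x) 1)]. *)
Lemma sform_tens_id_ptr (rho : op K) phi :
  sform (tens (id_op R (I := A)) (ptr (J := L) rho)) phi phi =
  \sum_a \sum_a1 sform rho (psi phi a1 a) (psi phi a1 a).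
Proof.
under [RHS]eq_bigr do under eq_bigr do rewrite sform_psi.
rewrite /sform (big_cglue dAL); apply: eq_bigr => a _.
rewrite [RHS]exchange_big; apply: eq_bigr => l _.
rewrite (big_cglue dAL) (bigD1 a) //= [X in _ + X]big1 ?addr0 => [|x /negbTE neq_x]; last first.
  by apply: big1 => l' _; rewrite tens_id_cglue eq_sym neq_x !mul0r mulr0 mul0r.
rewrite [RHS]exchange_big; apply: eq_bigr => l' _.
by rewrite tens_id_cglue eqxx mul1r ptr_cglue mulr_sumr mulr_suml.
Qed.

Lemma sum_psi_diag phi : (fun u => \sum_a psi phi a a u) = phi.
Proof.
apply/funext => u; rewrite /psi (bigD1 (restrA u)) //= eqxx mul1r.
rewrite cglue_restr big1 ?addr0 // => a neq_a.
by rewrite eq_sym (negbTE neq_a) mul0r.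
Qed.

Lemma psd_dim_tens_id_ptr (rho : op K) : psd rho ->
  psd_form (fun x y => #|{: conf A}|%:R * tens (id_op R (I := A)) (ptr (J := L) rho) x y
                       - rho x y).
Proof.
move=> psd_rho phi; rewrite sform_scaleB subr_ge0 -{1 2}(sum_psi_diag phi).
apply: le_trans (sform_sum_le _ psd_rho) _.
rewrite ler_wpM2l ?ler0n // sform_tens_id_ptr; apply: ler_sum => a _.
by rewrite (bigD1 a) //= lerDl; apply: sumr_ge0 => a1 _; apply: psd_rho.
Qed.

End Bipartite.

Section Tripartite.
Variables (A B C : {set 'I_N}).
Hypotheses (dAB : [disjoint A & B]) (dAC : [disjoint A & C]) (dBC : [disjoint B & C]).
Local Notation K := (A :|: (B :|: C)).

Let dA_BC : [disjoint A & B :|: C] := disjoint_setU dAB dAC.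

Definition glue3 (a : conf A) (b : conf B) (c : conf C) : conf K := cglue a (cglue b c).

Lemma big_glue3 (F : conf K -> R[i]) : \sum_u F u = \sum_a \sum_b \sum_c F (glue3 a b c).
Proof.
rewrite (big_cglue dA_BC); apply: eq_bigr => a _; exact: big_cglue.
Qed.

Lemma rst_glue3_A a b c : rst A (val (glue3 a b c)) = val a.
Proof. by rewrite rst_glue_l rst_val. Qed.

Lemma rst_glue3_B a b c : rst B (val (glue3 a b c)) = val b.
Proof. by rewrite rst_glue_r // rst_glue_l rst_val. Qed.

Lemma rst_glue3_C a b c : rst C (val (glue3 a b c)) = val c.
Proof. by rewrite !rst_glue_r // rst_val. Qed.

Lemma ptr_glue3_AB (X : op K) a b a' b' :
  ptr (J := A :|: B) X (cglue a b) (cglue a' b') = \sum_c X (glue3 a b c) (glue3 a' b' c).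
Proof.
have KAB : K :\: (A :|: B) = C.
  rewrite finset.setUA finset.setDUl finset.setDv finset.set0U; apply/finset.setDidPl.
  by apply: disjoint_setU; rewrite disjoint_sym.
apply: (@ptr_decomp K (A :|: B) _ _ (fun p c => glue3 p.1 p.2 c) (fun p => cglue p.1 p.2) X
          _ _ _ (a, b) (a', b')).
- by move=> F; rewrite big_glue3 pair_bigA.
- move=> [x y] c [x' y'] /=.
  rewrite rst_setU rst_glue3_A rst_glue3_B.
  by rewrite -[LHS]/(cglue x y == cglue x' y') (eq_cglue dAB).
- by move=> ? ? ? ?; rewrite KAB !rst_glue3_C val_eqE.
Qed.

Lemma ptr_glue3_B (X : op K) b b' :
  ptr (J := B) X b b' = \sum_a \sum_c X (glue3 a b c) (glue3 a b' c).
Proof.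
have KB : K :\: B = A :|: C.
  rewrite !finset.setDUl finset.setDv finset.set0U (finset.setDidPl dAB).
  by rewrite (finset.setDidPl _) // disjoint_sym.
rewrite pair_bigA /=.
apply: (@ptr_decomp K B _ _ (fun b p => glue3 p.1 b p.2) id X _ _ _ b b').
- by move=> F; rewrite big_glue3 exchange_big; apply: eq_bigr => ? _; rewrite pair_bigA.
- by move=> ? ? ?; rewrite rst_glue3_B val_eqE.
- move=> ? [x z] ? [x' z'] /=; rewrite KB !rst_setU !rst_glue3_A !rst_glue3_C.
  by rewrite -[LHS]/(cglue x z == cglue x' z') (eq_cglue dAC).
Qed.

Lemma ptr_tens_id_ptr (rho : op K) :
  ptr (J := A :|: B) (tens (id_op R (I := A)) (ptr (J := B :|: C) rho)) =
  tens (id_op R (I := A)) (ptr (J := B) rho).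
Proof.
apply/funext => x; apply/funext => y.
rewrite -(cglue_restr x) -(cglue_restr y) ptr_glue3_AB (tens_id_cglue dAB) ptr_glue3_B.
under eq_bigr do rewrite (tens_id_cglue dA_BC) (ptr_cglue dA_BC).
by rewrite -mulr_sumr exchange_big.
Qed.

End Tripartite.

End Configurations.

Lemma complexity_ampl (R : realType) (N : nat) (T : 'I_N -> finType)
    (M : forall I : {set 'I_N}, R -> op R T I -> Prop)
    (J L K : {set 'I_N}) (hJ : J \subset K) (r : R) (Q : op R T J) :
  complexity_family M -> [disjoint J & L] -> J :|: L = K -> 0 <= r ->
  M J r Q -> M K r (ampl hJ Q).
Proof.
case=> _ M_id _ M_tens dJL eK r_ge0 MQ; subst K.
rewrite (bool_irrelevance hJ (finset.subsetUl J L)) ampl_tens // -[r]addr0.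
exact: M_tens.
Qed.

Lemma ratio_lower_bound (R : realType) (eta : R) (s g : R[i]) (d : nat) :
  0 < eta -> (eta%:C)%C <= s -> 0 <= d%:R * g - s ->
  (0 < d)%N /\ d%:R^-1 <= complex.Re (g / s).
Proof.
move=> eta_gt0; rewrite -[(d%:R : R[i])](rmorph_nat (real_complex R)).
case: s => s1 s2; case: g => g1 g2; rewrite lecE /= => /andP[/eqP -> eta_le].
rewrite -[((d%:R : R)%:C)%C]complexr0; simpc => /andP[_ dg_ge].
have d_gt0 : (0 < d)%N.
  by rewrite lt0n; apply/negP => /eqP d0; move: dg_ge; rewrite d0 mul0r; lra.
split => //; have s1_gt0 : 0 < s1 by lra.
have -> : g1 * (s1 / (s1 ^+ 2 + 0 ^+ 2)) = g1 / s1 by field; rewrite gt_eqF.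
have d_gt0' : (0 : R) < d%:R by rewrite ltr0n.
by rewrite ler_pdivlMr // mulrC ler_pdivrMr //; lra.
Qed.

Lemma ln_inf_le_subset (R : realType) (S1 S2 : set R) (c : R) :
  0 < c -> lbound S1 c -> (S2 `<=` S1)%classic -> (S2 !=set0)%classic ->
  ln (inf S1) <= ln (inf S2).
Proof.
move=> c_gt0 S1_lb S21 [y S2y].
have S1_ne : (S1 !=set0)%classic by exists y; apply: S21.
have inf1_ge := lb_le_inf S1_ne S1_lb.
have inf12 : inf S1 <= inf S2.
  by apply: lb_le_inf => [|z /S21]; [exists y | apply: ge_inf; exists c].
by rewrite ler_ln ?posrE // (lt_le_trans c_gt0) // (le_trans inf1_ge).
Qed.

Theorem propositionD23 (R : realType) (N : nat) (T : 'I_N -> finType)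
    (M : forall I : {set 'I_N}, R -> op R T I -> Prop)
    (A B C : {set 'I_N}) (rho : op R T (A :|: (B :|: C))) (r eta : R) :
  complexity_family M ->
  [disjoint A & B] -> [disjoint A & C] -> [disjoint B & C] ->
  subnormalized rho ->
  0 <= r ->
  0 < eta -> ((eta%:C)%C <= tr rho)%R ->
  HH M r eta A (B :|: C) rho <= HH M r eta A B rho.
Proof.
move=> hM dAB dAC dBC [psd_rho _] r_ge0 eta_gt0 eta_le.
rewrite /HH /DH !opprK ptr_id.
set S1 := (X in ln (inf X) <= _); set S2 := (X in _ <= ln (inf X)).
set d := #|{: conf T A}|.
have sAB : A :|: B \subset A :|: (B :|: C) by rewrite finset.setUA finset.subsetUl.
have S1_lb y : S1 y -> (0 < d)%N /\ d%:R^-1 <= y.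
  case=> Q [MQ etaQ] <-; apply: ratio_lower_bound eta_gt0 etaQ _.
  rewrite -tr_mul_scaleB; case: hM => M_effect _ _ _.
  apply: psd_trace_mul_ge0; first exact: (M_effect _ _ _ r_ge0 MQ).1.
  exact: psd_dim_tens_id_ptr (disjoint_setU dAB dAC) _ psd_rho.
have S21 : (S2 `<=` S1)%classic.
  move=> _ [Q [MQ etaQ] <-]; exists (ampl sAB Q); last by rewrite !tr_ampl ptr_tens_id_ptr.
  split; last by rewrite tr_ampl.
  apply: (complexity_ampl _ hM _ (esym (finset.setUA A B C)) r_ge0 MQ).
  by rewrite disjoint_sym; apply: disjoint_setU; rewrite disjoint_sym.
have S2_ne : (S2 !=set0)%classic.
  eexists; exists (id_op R (I := A :|: B)) => //; split.
    by case: hM => _ M_id M_mono _; apply: (M_mono _ 0).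
  by rewrite tr_id_mul tr_ptr.
have [y /S21 /S1_lb [d_gt0 _]] := S2_ne.
apply: (@ln_inf_le_subset _ _ _ d%:R^-1) => //; first by rewrite invr_gt0 ltr0n.
by move=> y' /S1_lb [].
Qed.
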